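(* Let $Z=Z(P)$ be a fake weighted projective plane, with $\operatorname{Cl}(Z)\cong\mathbb{Z}\times\mathbb{Z}/n\mathbb{Z}$ and $w_0,w_1,w_2$ as in the context. Then there exists an integer $0\le x<nw_2$ with $\gcd(x,nw_2)=1$ such that $Z(P)\cong Z(P')$, where \[ P'=\begin{bmatrix}1 & x & -\frac{w_0+xw_1}{w_2}\\ 0 & nw_2 & -nw_1\end{bmatrix}. \]
   Context: Ground field algebraically closed of characteristic zero. For an integral $2\times3$ matrix $P=[v_0\ v_1\ v_2]$ with primitive columns generating $\mathbb{Q}^2$ as a convex cone, $Z(P)$ denotes the toric surface of the unique complete fan in $\mathbb{Z}^2$ with rays through $v_0,v_1,v_2$ (a fake weighted projective plane). Under a splitting $\operatorname{Cl}(Z)\cong\mathbb{Z}\times\mathbb{Z}/n\mathbb{Z}$, write $[D_i]=(w_i,\eta_i)$ for the invariant prime divisor $D_i$ of $v_i$, with the splitting chosen so that $w_i>0$. *)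

From mathcomp Require Import all_boot all_order all_algebra all_fingroup.
Set Implicit Arguments. Unset Strict Implicit. Unset Printing Implicit Defensive.
Import Order.TTheory GRing.Theory Num.Theory.
Local Open Scope ring_scope.

Definition fwpp_matrix (P : 'M[int]_(2,3)) : Prop :=
  (forall i : 'I_3, gcdz (P ord0 i) (P ord_max i) = 1%N) /\
  (forall q0 q1 : rat, exists a : 'I_3 -> rat,
      (forall i, 0 <= a i) /\
      q0 = \sum_i a i * (P ord0 i)%:~R /\
      q1 = \sum_i a i * (P ord_max i)%:~R).

(* Cl(Z(P)) = Z^3 / im(M -> Z^3, u |-> (<u,v_i>)_i), the class [D_i] being the
   image of e_i.  "class_group_splitting P n w eta" says: the map
   Z^3 -> Z x Z/nZ,  e_i |-> (w_i, eta_i mod n)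
   is surjective with kernel exactly the image of the character lattice, i.e.
   it induces an isomorphism Cl(Z) ~ Z x Z/nZ with [D_i] = (w_i, eta_i);
   moreover w_i > 0. *)
Definition class_group_splitting (P : 'M[int]_(2,3)) (n : nat)
    (w eta : 'I_3 -> int) : Prop :=
  (0 < n)%N /\ (forall i, 0 < w i) /\
  (forall a : 'I_3 -> int,
      (\sum_i a i * w i = 0 /\ (\sum_i a i * eta i = 0 %[mod n%:Z])%Z) <->
      (exists u0 u1 : int, forall i, a i = u0 * P ord0 i + u1 * P ord_max i)) /\
  (forall m k : int, exists a : 'I_3 -> int,
      \sum_i a i * w i = m /\ (\sum_i a i * eta i = k %[mod n%:Z])%Z).

Definition trip (w0 w1 w2 : int) : 'I_3 -> int :=
  fun i => nth 0 [:: w0; w1; w2] i.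

(* Isomorphism of the toric surfaces Z(P) ~ Z(Q) of the complete fans with the
   three rays through the columns: a lattice automorphism A in GL_2(Z) mapping
   the rays of one fan onto those of the other. *)
Definition toric_iso (P Q : 'M[int]_(2,3)) : Prop :=
  exists (A : 'M[int]_2) (s : {perm 'I_3}),
    (\det A = 1 \/ \det A = -1) /\
    forall i : 'I_3, A *m col i P = col (s i) Q.

Definition Pprime (n : nat) (w0 w1 w2 x : int) : 'M[int]_(2,3) :=
  \matrix_(i < 2, j < 3)
    if i == ord0 then nth 0 [:: 1; x; - ((w0 + x * w1) %/ w2)%Z] j
    else nth 0 [:: 0; n%:Z * w2; - (n%:Z * w1)] j.

From mathcomp Require Import all_boot all_order all_algebra all_fingroup.
From mathcomp Require Import ring.
Import Order.TTheory GRing.Theory Num.Theory.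
Local Open Scope ring_scope.

(* Let v_0, v_1, v_2 be the columns of P; a character is a row u = (u0, u1),
   acting by <u, v_i>.  As v_0 is primitive, a Bezout row (al, be)
   and the row (-v_0^2, v_0^1) form a unimodular matrix sending v_0 to e_1 and v_i
   to (<(al, be), v_i>, det(v_0, v_i)).  Characters are exactly the relations of
   Cl(Z), so w_1 det(v_0, v_1) + w_2 det(v_0, v_2) = 0; surjectivity of the degree
   onto Z forces gcd(w_1, w_2) = 1, hence (det(v_0, v_1), det(v_0, v_2)) =
   k (w_2, -w_1).  Surjectivity onto Z/n makes the class of (0, w_2, -w_1) a unit
   mod n, whence n | k, while (0, n w_2, -n w_1) has trivial class, hence is a
   character, whence k | n.  So k = +-n, and a sign change followed by a shear
   reducing the top entry of the image of v_1 modulo n w_2 produces P'; the gcd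
   condition holds because unimodular maps preserve the primitivity of v_1. *)

Definition i0 : 'I_3 := ord0.
Definition i1 : 'I_3 := @Ordinal 3 1 isT.
Definition i2 : 'I_3 := @Ordinal 3 2 isT.

Lemma ord3_cases (i : 'I_3) : [\/ i = i0, i = i1 | i = i2].
Proof.
by case: i => [[|[|[|//]]] ?]; [apply: Or31 | apply: Or32 | apply: Or33]; apply: val_inj.
Qed.

Lemma ord2_cases (i : 'I_2) : i = ord0 \/ i = ord_max.
Proof. by case: i => [[|[|//]] ?]; [left | right]; apply: val_inj. Qed.

Lemma big_ord3 (R : nmodType) (F : 'I_3 -> R) : \sum_i F i = F i0 + F i1 + F i2.
Proof.
rewrite !big_ord_recr big_ord0 /= add0r.
by congr (F _ + F _ + F _); apply: val_inj.
Qed.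

Lemma mulmx2E (R : pzSemiRingType) k (A : 'M[R]_2) (B : 'M[R]_(2, k)) i j :
  (A *m B) i j = A i ord0 * B ord0 j + A i ord_max * B ord_max j.
Proof.
rewrite !mxE !big_ord_recr big_ord0 /= add0r.
by congr (A i _ * B _ j + A i _ * B _ j); apply: val_inj.
Qed.

Lemma det_mx22 (R : comPzRingType) (A : 'M[R]_2) :
  \det A = A ord0 ord0 * A ord_max ord_max - A ord0 ord_max * A ord_max ord0.
Proof.
rewrite (expand_det_row _ ord0) !big_ord_recr big_ord0 /= add0r.
rewrite /cofactor !det_mx11 !mxE /= expr0 expr1 mul1r mulN1r.
have -> : widen_ord (leqnSn 1) ord_max = ord0 :> 'I_2 by apply: val_inj.
have -> : lift ord0 ord0 = ord_max :> 'I_2 by apply: val_inj.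
have -> : lift ord_max ord0 = ord0 :> 'I_2 by apply: val_inj.
by rewrite mulrN.
Qed.

Lemma coprimez_syzygy {p q a b : int} :
  coprimez p q -> a * p + b * q = 0 -> exists k, a = k * q /\ b = - (k * p).
Proof.
move=> /coprimezP [[r s] /= bezout] rel; exists (a * s - b * r).
split; apply/eqP; rewrite -subr_eq0 ?opprK.
- have -> : a - (a * s - b * r) * q = a * (1 - (r * p + s * q)) + r * (a * p + b * q)
    by ring.
  by rewrite bezout rel subrr !mulr0 addr0.
- have -> : b + (a * s - b * r) * p = b * (1 - (r * p + s * q)) + s * (a * p + b * q)
    by ring.
  by rewrite bezout rel subrr !mulr0 addr0.
Qed.

Lemma mulz_eq1 (x y : int) : x * y = 1 -> x = 1 \/ x = -1.
Proof.
move=> xy; have : x \is a GRing.unit by apply/unitrPr; exists y.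
by move=> /orP [/eqP | /eqP]; [left | right].
Qed.

Lemma coprimez_mulmx {A : 'M[int]_2} {x y : int} :
  \det A = 1 \/ \det A = -1 -> coprimez x y ->
  coprimez (A ord0 ord0 * x + A ord0 ord_max * y) (A ord_max ord0 * x + A ord_max ord_max * y).
Proof.
move=> unimodular /coprimezP [[u v] /= bezout]; apply/coprimezP.
have d2 : \det A * \det A = 1 by case: unimodular => ->.
exists (\det A * (u * A ord_max ord_max - v * A ord_max ord0),
        \det A * (v * A ord0 ord0 - u * A ord0 ord_max)) => /=.
transitivity (\det A * \det A * (u * x + v * y)); last by rewrite d2 bezout mul1r.
rewrite det_mx22; ring.
Qed.

Lemma toric_iso_mulmx (A : 'M[int]_2) (P : 'M[int]_(2, 3)) :
  \det A = 1 \/ \det A = -1 -> toric_iso P (A *m P).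
Proof. by move=> unimodular; exists A, 1%g; split=> // i; rewrite perm1 !colE mulmxA. Qed.

Definition pairing (P : 'M[int]_(2, 3)) (u0 u1 : int) (i : 'I_3) :=
  u0 * P ord0 i + u1 * P ord_max i.

Definition det_ray (P : 'M[int]_(2, 3)) (i : 'I_3) :=
  P ord0 i0 * P ord_max i - P ord_max i0 * P ord0 i.

(* Rows (al, be) - q s (-v_0^2, v_0^1) and s (-v_0^2, v_0^1): the sign s and the
   shear by q applied after the Bezout normalisation of v_0. *)
Definition normal_form_mx (P : 'M[int]_(2, 3)) (al be s q : int) : 'M[int]_2 :=
  \matrix_(i < 2, j < 2)
    if i == ord0 then
      (if j == ord0 then al + q * s * P ord_max i0 else be - q * s * P ord0 i0)
    else (if j == ord0 then - (s * P ord_max i0) else s * P ord0 i0).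

Section ClassGroup.

Context {P : 'M[int]_(2, 3)} {n : nat} {w0 w1 w2 : int} {eta : 'I_3 -> int}.
Hypothesis splitting : class_group_splitting P n (trip w0 w1 w2) eta.

Lemma pairing_in_kernel u0 u1 :
  pairing P u0 u1 i0 * w0 + pairing P u0 u1 i1 * w1 + pairing P u0 u1 i2 * w2 = 0 /\
  (n%:Z %| pairing P u0 u1 i0 * eta i0 + pairing P u0 u1 i1 * eta i1
           + pairing P u0 u1 i2 * eta i2)%Z.
Proof.
have [_ [_ [kernel _]]] := splitting.
have [] := proj2 (kernel (pairing P u0 u1)); first by exists u0, u1.
by rewrite !big_ord3 => -> /eqP; rewrite eqz_mod_dvd subr0.
Qed.

Lemma kernel_is_pairing b0 b1 b2 :
  b0 * w0 + b1 * w1 + b2 * w2 = 0 ->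
  (n%:Z %| b0 * eta i0 + b1 * eta i1 + b2 * eta i2)%Z ->
  exists u0 u1,
    [/\ b0 = pairing P u0 u1 i0, b1 = pairing P u0 u1 i1 & b2 = pairing P u0 u1 i2].
Proof.
have [_ [_ [kernel _]]] := splitting.
move=> deg0 tors0; have [|u0 [u1 hu]] := proj1 (kernel (trip b0 b1 b2)).
  by rewrite !big_ord3; split=> //; apply/eqP; rewrite eqz_mod_dvd subr0.
by exists u0, u1; split; [apply: (hu i0) | apply: (hu i1) | apply: (hu i2)].
Qed.

Lemma degree_surjective m k : exists b0 b1 b2,
  b0 * w0 + b1 * w1 + b2 * w2 = m /\
  (n%:Z %| b0 * eta i0 + b1 * eta i1 + b2 * eta i2 - k)%Z.
Proof.
have [_ [_ [_ surj]]] := splitting.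
have [b [deg tors]] := surj m k; exists (b i0), (b i1), (b i2).
by move/eqP: tors; rewrite -deg eqz_mod_dvd !big_ord3.
Qed.

Context {al be : int}.
Hypothesis bezout : al * P ord0 i0 + be * P ord_max i0 = 1.

Local Notation a := (pairing P al be i1).
Local Notation c := (pairing P al be i2).

Lemma bezout_row_relation :
  w0 + a * w1 + c * w2 = 0 /\ (n%:Z %| eta i0 + a * eta i1 + c * eta i2)%Z.
Proof. by have [] := pairing_in_kernel al be; rewrite /pairing bezout !mul1r. Qed.

Lemma coprimez_w12 : coprimez w1 w2.
Proof.
have [b0 [b1 [b2 [deg1 _]]]] := degree_surjective 1 0.
have [rel _] := bezout_row_relation.
apply/coprimezP; exists (b1 - b0 * a, b2 - b0 * c) => /=.
transitivity (b0 * w0 + b1 * w1 + b2 * w2 - b0 * (w0 + a * w1 + c * w2)); first by ring.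
by rewrite rel mulr0 subr0 deg1.
Qed.

Lemma coprimez_torsion_class : coprimez n (w2 * eta i1 - w1 * eta i2).
Proof.
have [b0 [b1 [b2 [deg0 /dvdzP [q tors1]]]]] := degree_surjective 0 1.
have [rel /dvdzP [r tors0]] := bezout_row_relation.
have [m [t1 t2]] : exists m, b1 - b0 * a = m * w2 /\ b2 - b0 * c = - (m * w1).
  apply: coprimez_syzygy coprimez_w12 _.
  transitivity (b0 * w0 + b1 * w1 + b2 * w2 - b0 * (w0 + a * w1 + c * w2)); first by ring.
  by rewrite rel mulr0 subr0 deg0.
apply/coprimezP; exists (b0 * r - q, m) => /=.
transitivity ((m * w2) * eta i1 + (- (m * w1)) * eta i2 + b0 * (r * n%:Z) - q * n%:Z).
  by ring.
by rewrite -t1 -t2 -tors0 -tors1; ring.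
Qed.

Lemma det_ray_weights : exists s : int,
  (s = 1 \/ s = -1) /\ det_ray P i1 = s * n%:Z * w2 /\ det_ray P i2 = - (s * n%:Z * w1).
Proof.
have [n_gt0 [w_gt0 _]] := splitting.
have w2_neq0 : w2 != 0 by rewrite gt_eqF // (w_gt0 i2).
have n_neq0 : n%:Z != 0 by rewrite gt_eqF // ltz_nat.
have v0_coprime : coprimez (P ord0 i0) (P ord_max i0) by apply/coprimezP; exists (al, be).
have [D_rel E_rel] := pairing_in_kernel (- P ord_max i0) (P ord0 i0).
have pairing_det i : pairing P (- P ord_max i0) (P ord0 i0) i = det_ray P i.
  by rewrite /pairing /det_ray; ring.
rewrite !pairing_det (_ : det_ray P i0 = 0) ?mul0r ?add0r in D_rel E_rel;
  last by rewrite /det_ray; ring.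
have [k [Dk Ek]] := coprimez_syzygy coprimez_w12 D_rel.
have n_dvd_k : (n%:Z %| k)%Z.
  rewrite -(Gauss_dvdzl k coprimez_torsion_class).
  by rewrite (_ : k * _ = det_ray P i1 * eta i1 + det_ray P i2 * eta i2) // Dk Ek; ring.
have [u0 [u1 [u_v0 u_v1 _]]] : exists u0 u1, [/\ 0 = pairing P u0 u1 i0,
    n%:Z * w2 = pairing P u0 u1 i1 & - (n%:Z * w1) = pairing P u0 u1 i2].
  apply: kernel_is_pairing; first by ring.
  rewrite (_ : _ + _ = (w2 * eta i1 - w1 * eta i2) * n%:Z); first exact: dvdz_mull.
  by ring.
have [t [u0t u1t]] := coprimez_syzygy v0_coprime (esym u_v0).
have n_eq : n%:Z = - t * k.
  apply: (mulIf w2_neq0); rewrite u_v1 -mulrA -Dk /pairing u0t u1t /det_ray; ring.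
have [j kj] := dvdzP n_dvd_k.
have tj : - t * j = 1.
  by apply: (mulIf n_neq0); rewrite mul1r {2}n_eq kj mulrA.
exists j; split; first by apply: (@mulz_eq1 j (- t)); rewrite mulrC.
by rewrite Dk Ek kj.
Qed.

Lemma weight_relation_shift q :
  w0 + (a - q * (n%:Z * w2)) * w1 = - (c + q * n%:Z * w1) * w2.
Proof.
have [rel _] := bezout_row_relation.
transitivity (w0 + a * w1 + c * w2 - (c + q * n%:Z * w1) * w2); first by ring.
by rewrite rel sub0r mulNr.
Qed.

Lemma det_normal_form_mx s q : \det (normal_form_mx P al be s q) = s.
Proof.
rewrite det_mx22 !mxE /=.
by transitivity (s * (al * P ord0 i0 + be * P ord_max i0)); [ring | rewrite bezout mulr1].
Qed.

Lemma normal_form_mxE s q :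
  s = 1 \/ s = -1 -> det_ray P i1 = s * n%:Z * w2 -> det_ray P i2 = - (s * n%:Z * w1) ->
  normal_form_mx P al be s q *m P = Pprime n w0 w1 w2 (a - q * (n%:Z * w2)).
Proof.
move=> s_sign D_eq E_eq.
have w2_neq0 : w2 != 0 by have [_ [w_gt0 _]] := splitting; rewrite gt_eqF // (w_gt0 i2).
have shift := weight_relation_shift q.
have det0 : det_ray P i0 = 0 by rewrite /det_ray; ring.
have pairing0 : pairing P al be i0 = 1 := bezout.
have row0E j : (al + q * s * P ord_max i0) * P ord0 j + (be - q * s * P ord0 i0) * P ord_max j
    = pairing P al be j - q * s * det_ray P j by rewrite /pairing /det_ray; ring.
have row1E j : - (s * P ord_max i0) * P ord0 j + s * P ord0 i0 * P ord_max j = s * det_ray P j.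
  by rewrite /det_ray; ring.
apply/matrixP => i j; rewrite mulmx2E !mxE.
case: (ord2_cases i) => ->; case: (ord3_cases j) => -> /=;
  rewrite ?row0E ?row1E ?det0 ?pairing0 ?D_eq ?E_eq ?shift ?mulzK ?mulr0 ?subr0 //;
  by case: s_sign => ->; ring.
Qed.

End ClassGroup.

Theorem proposition8p3 (P : 'M[int]_(2,3)) (n : nat) (w0 w1 w2 : int)
    (eta : 'I_3 -> int) :
  fwpp_matrix P ->
  class_group_splitting P n (trip w0 w1 w2) eta ->
  exists x : int,
    0 <= x < n%:Z * w2 /\
    gcdz x (n%:Z * w2) = 1%N /\
    (w2 %| w0 + x * w1)%Z /\
    toric_iso P (Pprime n w0 w1 w2 x).
Proof.
move=> [primitive _] splitting.
have primitive_coprime i : coprimez (P ord0 i) (P ord_max i) by apply/eqP.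
have /coprimezP [[al be] /= bezout] := primitive_coprime i0.
have [s [s_sign [D_eq E_eq]]] := det_ray_weights splitting bezout.
have [n_gt0 [w_gt0 _]] := splitting.
set a := pairing P al be i1; set N := n%:Z * w2.
have N_gt0 : 0 < N by rewrite mulr_gt0 ?ltz_nat // (w_gt0 i2).
set A := normal_form_mx P al be s (a %/ N)%Z.
have unimodular : \det A = 1 \/ \det A = -1 by rewrite (det_normal_form_mx bezout).
have A_P := normal_form_mxE splitting bezout s (a %/ N)%Z s_sign D_eq E_eq.
have a_mod : a - (a %/ N)%Z * N = (a %% N)%Z by rewrite {1}(divz_eq a N); ring.
rewrite -/N a_mod in A_P.
exists (a %% N)%Z; split; first by rewrite modz_ge0 ?gt_eqF ?ltz_pmod.
split.
  have := coprimez_mulmx unimodular (primitive_coprime i1).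
  by rewrite -!mulmx2E A_P !mxE /= => /eqP.
split; first by rewrite -a_mod (weight_relation_shift splitting bezout); apply/dvdz_mull/dvdzz.
by rewrite -A_P; apply: toric_iso_mulmx.
Qed.
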